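(* Assume (A1)–(A2) below. Let $(\rho,w)$ be a classical solution on $[0,T]$ of $(S_{\varepsilon,\gamma})$ and $(\hat\rho,\hat w)$ a classical solution on $[0,T]$ of $(S_{\hat\varepsilon,\hat\gamma})$, with $(\hat\rho,\hat w)$ Lipschitz. Let $h(\tilde\rho,\tilde w)=\varepsilon^2\tilde w^2/2+P'(\tilde\rho)+gz$, $m(\tilde\rho,\tilde w)=a\tilde\rho\tilde w$ be the co-state maps of the unperturbed problem, and $h_\partial=h(\rho,w)|_{\{0,\ell\}}$, $\hat h_\partial=\hat h(\hat\rho,\hat w)|_{\{0,\ell\}}$ with $\hat h(\hat\rho,\hat w)=\hat\varepsilon^2\hat w^2/2+P'(\hat\rho)+gz$. Then at every time $$-\Big[(h(\rho,w)-h(\hat\rho,\hat w))(m(\rho,w)-m(\hat\rho,\hat w))\Big]_{x=0}^{x=\ell}\le\hat C_\partial\big(|h_\partial-\hat h_\partial|_\partial+|\varepsilon^2-\hat\varepsilon^2|\big),$$ with $\hat C_\partial$ depending only on the bounds in (A1)–(A2) and the Lipschitz bounds of $(\hat\rho,\hat w)$.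
   Context: Fix $\ell>0$, $a:[0,\ell]\to\mathbb{R}$, a constant $g$, $z:[0,\ell]\to\mathbb{R}$, smooth strictly convex $P:(0,\infty)\to\mathbb{R}$. System $(S_{\varepsilon,\gamma})$: $a\partial_\tau\rho+\partial_xm=0$, $\varepsilon^2\partial_\tau w+\partial_xh+\gamma|w|w=0$, $m=a\rho w$, $h=\varepsilon^2w^2/2+P'(\rho)+gz$ on $0<x<\ell$. (A1): positive constants $\underline\rho\le\bar\rho$, $\bar w$, $\bar\varepsilon$ with $\rho P''(\rho)\ge4\bar\varepsilon^2\bar w^2$ for $\underline\rho\le\rho\le\bar\rho$; $0<\underline a\le a\le\bar a$; $|gz|\le\bar g\bar z$. (A2): $0\le\varepsilon,\hat\varepsilon\le\bar\varepsilon$, $0<\underline\gamma\le\gamma,\hat\gamma\le\bar\gamma$, solutions satisfy $\underline\rho\le\rho\le\bar\rho$, $-\bar w\le w\le\bar w$. A classical solution on $[0,T]$: $(\rho,w)\in C^1([0,T];L^2(0,\ell)^2)$ satisfying these bounds, $(h,m)\in C^0([0,T];H^1(0,\ell)^2)$, with $(a\partial_\tau\rho,q)+(\partial_xm,q)=0$ and $(\varepsilon^2\partial_\tau w,r)-(h,\partial_xr)+(\gamma|w|w,r)=-[hr]_0^\ell$ for all $q,r\in H^1(0,\ell)$ and all times. For boundary values $f$, $|f|_\partial=\sqrt{|f(0)|^2+|f(\ell)|^2}$. *)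

From HB Require Import structures.
From mathcomp Require Import all_boot all_order all_algebra.
From mathcomp Require Import all_classical all_reals all_analysis.
Set Implicit Arguments. Unset Strict Implicit. Unset Printing Implicit Defensive.
Import Order.TTheory GRing.Theory Num.Theory.
Import numFieldNormedType.Exports.
Local Open Scope classical_set_scope.
Local Open Scope ring_scope.

Section Defs.
Variable R : realType.
Local Notation mu := (@lebesgue_measure R).

(* the space interval (0,l) (closed version; endpoints are null sets) *)
Definition sdom (l : R) : set R := `[0, l]%classic.

Definition L2sq (l : R) (f : R -> R) : \bar R :=
  (\int[mu]_(x in sdom l) ((f x) ^+ 2)%:E)%E.

Definition L2lt (l : R) (f : R -> R) (e : R) : Prop := (L2sq l f < e%:E)%E.

Definition inL2 (l : R) (f : R -> R) : Prop :=
  measurable_fun (sdom l) f /\ (L2sq l f < +oo)%E.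

Definition ip (l : R) (f g : R -> R) : R :=
  Rintegral mu (sdom l) (fun x => f x * g x).

(* f belongs to H1(0,l) with weak derivative df: df in L2 and f is
   (the absolutely continuous representative) f x = f 0 + int_0^x df. *)
Definition H1 (l : R) (f df : R -> R) : Prop :=
  inL2 l f /\ inL2 l df /\
  forall x, 0 <= x <= l -> f x = f 0 + Rintegral mu `[0, x]%classic df.

Definition inH1 (l : R) (f : R -> R) : Prop := exists df, H1 l f df.

(* u : time -> space -> R belongs to C^1([0,T]; L2(0,l)), with time
   derivative du (in the L2 sense, one-sided at the endpoints of [0,T]) *)
Definition C1L2 (l T : R) (u du : R -> R -> R) : Prop :=
  (forall t, 0 <= t <= T -> inL2 l (u t) /\ inL2 l (du t)) /\
  (forall t, 0 <= t <= T -> forall e : R, 0 < e -> exists2 d : R, 0 < d &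
     forall s : R, 0 < `|s| < d -> 0 <= t + s <= T ->
       L2lt l (fun x => (u (t + s) x - u t x) / s - du t x) e) /\
  (forall t, 0 <= t <= T -> forall e : R, 0 < e -> exists2 d : R, 0 < d &
     forall t', 0 <= t' <= T -> `|t' - t| < d ->
       L2lt l (fun x => du t' x - du t x) e).

Definition C0H1 (l T : R) (u ux : R -> R -> R) : Prop :=
  (forall t, 0 <= t <= T -> H1 l (u t) (ux t)) /\
  (forall t, 0 <= t <= T -> forall e : R, 0 < e -> exists2 d : R, 0 < d &
     forall t', 0 <= t' <= T -> `|t' - t| < d ->
       L2lt l (fun x => u t' x - u t x) e /\
       L2lt l (fun x => ux t' x - ux t x) e).

Definition smooth_pos (P : R -> R) : Prop :=
  forall n : nat, forall x : R, 0 < x -> derivable (derive1n n P) x 1.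

Definition strictly_convex_pos (P : R -> R) : Prop :=
  forall x y s : R, 0 < x -> 0 < y -> x != y -> 0 < s < 1 ->
    P ((1 - s) * x + s * y) < (1 - s) * P x + s * P y.

Definition dP (P : R -> R) := derive1n 1 P.
Definition ddP (P : R -> R) := derive1n 2 P.

Definition hmap (eps g : R) (z P : R -> R) (rho w x : R) : R :=
  eps ^+ 2 * w ^+ 2 / 2 + dP P rho + g * z x.
Definition mmap (a : R -> R) (rho w x : R) : R := a x * rho * w.

(* classical solution on [0,T] of (S_{eps,gamma}) with the bounds of (A2);
   rho, w are (representatives of) functions of time and space. *)
Definition classical_solution (l T : R) (a : R -> R) (g : R) (z P : R -> R)
  (eps gam rho_lo rho_hi wbar : R) (rho w : R -> R -> R) : Prop :=
  let h := fun t x => hmap eps g z P (rho t x) (w t x) x in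
  let m := fun t x => mmap a (rho t x) (w t x) x in
  (forall t x, 0 <= t <= T -> 0 <= x <= l ->
     rho_lo <= rho t x <= rho_hi /\ - wbar <= w t x <= wbar) /\
  exists drho dw hx mx : R -> R -> R,
    C1L2 l T rho drho /\ C1L2 l T w dw /\
    C0H1 l T h hx /\ C0H1 l T m mx /\
    forall t, 0 <= t <= T ->
      forall q dq r dr : R -> R, H1 l q dq -> H1 l r dr ->
        ip l (fun x => a x * drho t x) q + ip l (mx t) q = 0 /\
        ip l (fun x => eps ^+ 2 * dw t x) r - ip l (h t) dr
          + ip l (fun x => gam * `|w t x| * w t x) r
        = - (h t l * r l - h t 0 * r 0).

Definition lipschitz2 (l T L : R) (u : R -> R -> R) : Prop :=
  forall t x t' x', 0 <= t <= T -> 0 <= x <= l -> 0 <= t' <= T -> 0 <= x' <= l ->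
    `|u t x - u t' x'| <= L * (`|t - t'| + `|x - x'|).

Definition bnorm (f0 fl : R) : R := Num.sqrt (f0 ^+ 2 + fl ^+ 2).

End Defs.

From HB Require Import structures.
From mathcomp Require Import all_boot all_order all_algebra.
From mathcomp Require Import all_classical all_reals all_analysis.
From mathcomp Require Import ring lra.
Import Order.TTheory GRing.Theory Num.Theory.
Import numFieldNormedType.Exports.
Local Open Scope ring_scope.
Set Implicit Arguments. Unset Strict Implicit.

(* Each boundary term is bounded separately: m - m' is bounded by the a priori
   bounds of (A1)-(A2), and h - hu' differs from the perturbed difference h - h'
   only by the kinetic term (eps^2 - eps'^2) w'^2 / 2, with |w'| <= wbar.  So the
   constant depends only on a_hi, rho_hi and wbar. *)

Section BoundaryBounds.
Variable R : realType.

Lemma hmap_epsB (eps eps' g : R) (z P : R -> R) (r w x : R) :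
  hmap eps g z P r w x - hmap eps' g z P r w x
  = (eps ^+ 2 - eps' ^+ 2) * (w ^+ 2 / 2).
Proof. by rewrite /hmap; ring. Qed.

Lemma norm_hmap_epsB_le (eps eps' g : R) (z P : R -> R) (r w x Wb : R) : `|w| <= Wb ->
  `|hmap eps g z P r w x - hmap eps' g z P r w x|
  <= `|eps ^+ 2 - eps' ^+ 2| * (Wb ^+ 2 / 2).
Proof.
move=> wWb; rewrite hmap_epsB normrM ler_wpM2l // ger0_norm; last first.
  by rewrite divr_ge0 ?sqr_ge0.
rewrite ler_pM2r // -[w ^+ 2]real_normK ?num_real //.
by apply: lerXn2r; rewrite ?nnegrE // (le_trans _ wWb).
Qed.

Lemma norm_mmap_le (a : R -> R) (r w x A Rh Wb : R) :
  `|a x| <= A -> `|r| <= Rh -> `|w| <= Wb -> `|mmap a r w x| <= A * Rh * Wb.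
Proof. by move=> aA rRh wWb; rewrite /mmap !normrM !ler_pM ?mulr_ge0. Qed.

Lemma norm_mmapB_le (a : R -> R) (r w r' w' x A Rh Wb : R) :
  `|a x| <= A -> `|r| <= Rh -> `|w| <= Wb -> `|r'| <= Rh -> `|w'| <= Wb ->
  `|mmap a r w x - mmap a r' w' x| <= 2 * (A * Rh * Wb).
Proof.
move=> aA rRh wWb rRh' wWb'.
have := norm_mmap_le aA rRh wWb; have := norm_mmap_le aA rRh' wWb'.
by have := ler_normB (mmap a r w x) (mmap a r' w' x); lra.
Qed.

Lemma bnorm_ge_l (u v : R) : `|u| <= bnorm u v.
Proof. by rewrite /bnorm -sqrtr_sqr ler_sqrt ?lerDl ?sqr_ge0 ?addr_ge0 ?sqr_ge0. Qed.

Lemma bnorm_ge_r (u v : R) : `|v| <= bnorm u v.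
Proof. by rewrite /bnorm -sqrtr_sqr ler_sqrt ?lerDr ?sqr_ge0 ?addr_ge0 ?sqr_ge0. Qed.

Lemma normM_le_split (X Y d e b M W : R) : 0 <= M -> 0 <= W ->
  `|X| <= `|d| + `|e| * W -> `|d| <= b -> `|Y| <= M ->
  `|X * Y| <= M * (1 + W) * (b + `|e|).
Proof.
move=> M0 W0 Xd db YM; rewrite normrM mulrC.
have e0 := normr_ge0 e; have b0 := le_trans (normr_ge0 d) db.
have XbW : `|X| <= (1 + W) * (b + `|e|).
  apply: (le_trans Xd); rewrite mulrDl mul1r mulrDr.
  have : 0 <= W * b by rewrite mulr_ge0.
  rewrite [W * `|e|]mulrC; lra.
by rewrite -mulrA ler_pM.
Qed.

Lemma oppr_subr_le (A B K : R) : `|A| <= K -> `|B| <= K -> - (A - B) <= 2 * K.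
Proof. by move=> AK BK; have := ler_normB A B; have := ler_norm (- (A - B)); rewrite normrN; lra. Qed.

Lemma classical_solution_norm_le (l T : R) (a : R -> R) (g : R) (z P : R -> R)
    (eps gam rho_lo rho_hi wbar : R) (rho w : R -> R -> R) (t x : R) :
  0 < rho_lo -> classical_solution l T a g z P eps gam rho_lo rho_hi wbar rho w ->
  0 <= t <= T -> 0 <= x <= l -> `|rho t x| <= rho_hi /\ `|w t x| <= wbar.
Proof.
move=> rho_lo0 [bd _] t_in x_in; have [/andP[r_lo r_hi] w_bd] := bd t x t_in x_in.
by rewrite [`|w t x| <= _]ler_norml w_bd ger0_norm; lra.
Qed.

End BoundaryBounds.

Theorem corollary4p8 (R : realType)
  (rho_lo rho_hi wbar epsbar a_lo a_hi gbar zbar gam_lo gam_hi L : R) :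
  0 < rho_lo -> rho_lo <= rho_hi -> 0 < wbar -> 0 < epsbar ->
  0 < a_lo -> a_lo <= a_hi -> 0 < gam_lo -> gam_lo <= gam_hi -> 0 <= L ->
  exists C : R,
  forall (l T : R) (a : R -> R) (g : R) (z P : R -> R)
         (eps gam eps' gam' : R) (rho w rho' w' : R -> R -> R),
    0 < l -> 0 <= T ->
    smooth_pos P -> strictly_convex_pos P ->
    (* (A1) *)
    (forall r, rho_lo <= r <= rho_hi -> 4 * epsbar ^+ 2 * wbar ^+ 2 <= r * ddP P r) ->
    (forall x, 0 <= x <= l -> a_lo <= a x <= a_hi) ->
    (forall x, 0 <= x <= l -> `|g * z x| <= gbar * zbar) ->
    (* (A2) *)
    0 <= eps <= epsbar -> 0 <= eps' <= epsbar ->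
    gam_lo <= gam <= gam_hi -> gam_lo <= gam' <= gam_hi ->
    classical_solution l T a g z P eps gam rho_lo rho_hi wbar rho w ->
    classical_solution l T a g z P eps' gam' rho_lo rho_hi wbar rho' w' ->
    lipschitz2 l T L rho' -> lipschitz2 l T L w' ->
    forall t, 0 <= t <= T ->
      let h := fun x => hmap eps g z P (rho t x) (w t x) x in
      let hu' := fun x => hmap eps g z P (rho' t x) (w' t x) x in
      let h' := fun x => hmap eps' g z P (rho' t x) (w' t x) x in
      let m := fun x => mmap a (rho t x) (w t x) x in
      let m' := fun x => mmap a (rho' t x) (w' t x) x in
      - ((h l - hu' l) * (m l - m' l) - (h 0 - hu' 0) * (m 0 - m' 0))
      <= C * (bnorm (h 0 - h' 0) (h l - h' l) + `|eps ^+ 2 - eps' ^+ 2|).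
Proof.
move=> rho_lo0 rho_le wbar0 _ a_lo0 a_le _ _ _.
set M := 2 * (a_hi * rho_hi * wbar); set W := wbar ^+ 2 / 2.
exists (2 * (M * (1 + W))).
move=> l T a g z P eps gam eps' gam' rho w rho' w' l0 _ _ _ _ a_bd _ _ _ _ _
  sol sol' _ _ t t_in /=.
pose h x := hmap eps g z P (rho t x) (w t x) x.
pose hu' x := hmap eps g z P (rho' t x) (w' t x) x.
pose h' x := hmap eps' g z P (rho' t x) (w' t x) x.
pose m x := mmap a (rho t x) (w t x) x.
pose m' x := mmap a (rho' t x) (w' t x) x.
pose bn := bnorm (h 0 - h' 0) (h l - h' l).
have jump_le x : 0 <= x <= l -> `|h x - h' x| <= bn ->
    `|(h x - hu' x) * (m x - m' x)| <= M * (1 + W) * (bn + `|eps ^+ 2 - eps' ^+ 2|).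
  move=> x_in hbn.
  have [r_bd w_bd] := classical_solution_norm_le rho_lo0 sol t_in x_in.
  have [r_bd' w_bd'] := classical_solution_norm_le rho_lo0 sol' t_in x_in.
  have ax : `|a x| <= a_hi.
    by have /andP[? ?] := a_bd x x_in; rewrite ger0_norm //; lra.
  apply: (normM_le_split (d := h x - h' x)) hbn _.
  - by rewrite /M !mulr_ge0 //; lra.
  - by rewrite /W divr_ge0 ?sqr_ge0.
  - have -> : h x - hu' x = (h x - h' x) - (hu' x - h' x).
      by rewrite opprB addrA subrK.
    by rewrite (le_trans (ler_normB _ _)) // lerD2l norm_hmap_epsB_le.
  - exact: norm_mmapB_le.
have x0 : (0 : R) <= 0 <= l by rewrite lexx ltW.
have xl : 0 <= l <= l by rewrite lexx andbT ltW.
rewrite -mulrA.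
exact: oppr_subr_le (jump_le l xl (bnorm_ge_r _ _)) (jump_le 0 x0 (bnorm_ge_l _ _)).
Qed.
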